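(* Let $r\ge1$ and let $p_1,p_2,\ldots,p_r$ be primes, each $\ge5$ (not necessarily distinct). Then for every $n\ge0$, \[ b_2\!\left(\prod_{s=1}^{r}p_s^2\, n+\frac{(24i+p_{r})\prod_{s=1}^{r-1}p_s^2\,p_{r}-1}{24}\right)\equiv 0 \pmod 2 \] for each $i=1,2,\ldots,p_r-1$ (with the empty product equal to $1$).
   Context: For a positive integer $\ell$, $b_\ell(n)$ denotes the number of partitions of $n$ having no part divisible by $\ell$. *)

From mathcomp Require Import all_boot.
Set Implicit Arguments. Unset Strict Implicit. Unset Printing Implicit Defensive.

(* A partition of n is encoded by its multiplicity function:
   m k = number of parts equal to k, for k = 0..n (parts are <= n),
   with sum_k k * m k = n and m 0 = 0.  Multiplicities are <= n.
   The condition "no part divisible by ell" says m k = 0 whenever ell %| k;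
   since ell %| 0, this also forces m 0 = 0. *)
Definition ell_regular_partitions (ell n : nat) :=
  [set m : {ffun 'I_n.+1 -> 'I_n.+1} |
     (\sum_(k : 'I_n.+1) (k * m k)%N == n) &&
     [forall k : 'I_n.+1, (ell %| k) ==> (m k == 0 :> nat)]].

Definition b (ell n : nat) : nat := #|ell_regular_partitions ell n|.

From mathcomp Require Import all_boot all_algebra.
From mathcomp Require Import ring zify.
Set Implicit Arguments. Unset Strict Implicit. Unset Printing Implicit Defensive.
Import GRing.Theory.

(* The generating function of 2-regular partitions is (q^2;q^2)/(q;q) = (-q;q), which is
   congruent to (q;q) modulo 2.  By Euler's pentagonal number theorem (here in Shanks'
   finite form) the coefficient of q^N in (q;q) vanishes unless N = j(3j-1)/2 or
   j(3j+1)/2, and then 24N+1 = (6j-+1)^2 is a square.  For the N of the theorem,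
   24N+1 = y^2 p_r (24 p_r n + 24 i + p_r) with y = p_1...p_(r-1), using p^2 = 1 mod 24
   for primes p >= 5; as p_r does not divide the last factor, p_r divides 24N+1 to an
   odd power, so 24N+1 is not a square. *)

(* j(3j-1)/2 and j(3j+1)/2 *)
Definition gen_pentagonal (N : nat) : Prop :=
  exists j, N = j * j + 'C(j, 2) \/ N = j * j + 'C(j.+1, 2).

Section EulerPentagonal.
Local Open Scope ring_scope.
Variable R : comNzRingType.

Definition euler_poly n : {poly R} := \prod_(0 <= j < n) (1 - 'X^(j.+1)).

(* [shanks_sum n] is the pentagonal series cut at j = n, yet it agrees with
   [euler_poly n] in degrees <= n. *)
Definition shanks_term e n k : {poly R} :=
  (-1) ^+ k * 'X^(e * k + 'C(k.+1, 2)) * \prod_(k <= j < n) (1 - 'X^(j.+1)).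

Definition shanks_sum n := \sum_(0 <= k < n.+1) shanks_term n n k.

Lemma shanks_termS m k : (k < m)%N ->
  shanks_term m.+1 m.+1 k =
    shanks_term m.+1 m k + shanks_term m m k.+1 - shanks_term m.+1 m k.+1.
Proof.
move=> lt_km; rewrite /shanks_term.
rewrite big_nat_recr 1?ltnW //= (big_ltn lt_km).
have -> : 'X^(m * k.+1 + 'C(k.+2, 2)) =
          'X^(m.+1 * k + 'C(k.+1, 2)) * 'X^(m.+1) :> {poly R}.
  by rewrite -exprD binS bin1; congr ('X^_); rewrite !mulSn !mulnS; lia.
have -> : 'X^(m.+1 * k.+1 + 'C(k.+2, 2)) =
          'X^(m.+1 * k + 'C(k.+1, 2)) * 'X^(m.+1) * 'X^(k.+1) :> {poly R}.
  by rewrite -!exprD binS bin1; congr ('X^_); rewrite !mulSn !mulnS; lia.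
rewrite [(-1) ^+ k.+1]exprS.
move: (\prod_(k.+1 <= j < m) _) ((-1) ^+ k) ('X^(_ + _) : {poly R}) ('X^(k.+1) : {poly R}).
by move: ('X^(m.+1) : {poly R}) => W Q s V Z; ring.
Qed.

Lemma shanks_sumS m : shanks_sum m.+1 = shanks_sum m +
  (-1) ^+ m.+1 * ('X^(m.+1 * m.+1 + 'C(m.+1, 2)) + 'X^(m.+1 * m.+1 + 'C(m.+2, 2))).
Proof.
rewrite /shanks_sum big_nat_recr //= big_nat_recr //=.
have -> : \sum_(0 <= k < m) shanks_term m.+1 m.+1 k = \sum_(0 <= k < m)
    (shanks_term m m k.+1 - (shanks_term m.+1 m k.+1 - shanks_term m.+1 m k)).
  by rewrite !big_nat; apply: eq_bigr => k /andP[_ lt_km]; rewrite shanks_termS //; ring.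
rewrite sumrB telescope_sumr // [in RHS]big_ltn // big_add1 /=.
have -> : shanks_term m.+1 m 0 = shanks_term m m 0 by rewrite /shanks_term !muln0.
rewrite /shanks_term (big_geq (leqnn m)) (big_geq (leqnn m.+1)) big_nat1.
have -> : 'X^(m.+1 * m.+1 + 'C(m.+1, 2)) =
          'X^(m.+1 * m + 'C(m.+1, 2)) * 'X^(m.+1) :> {poly R}.
  by rewrite -exprD; congr ('X^_); lia.
rewrite [(-1) ^+ m.+1]exprS.
move: (\sum_(0 <= i < m) _) ((-1) ^+ m) ('X^(m.+1 * m + _) : {poly R}).
by move: ('X^(m.+1) : {poly R}) => W A s V; ring.
Qed.

Lemma coef_shanks_sum_diag N : (shanks_sum N)`_N = (euler_poly N)`_N.
Proof.
rewrite /shanks_sum big_ltn // coefD coef_sum big_nat big1 ?addr0.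
  by rewrite /shanks_term muln0 !mul1r.
move=> k /andP[k_gt0 _]; rewrite /shanks_term mulrC mulrA mulrC coefXnM ifT //.
have : (1 <= 'C(k.+1, 2))%N by rewrite bin_gt0.
have : (N <= N * k)%N by rewrite leq_pmulr.
lia.
Qed.

Lemma coef_shanks_sum_eq0 N : ~ gen_pentagonal N -> forall n, (shanks_sum n)`_N = 0.
Proof.
move=> not_pent; elim=> [|n IHn].
  rewrite /shanks_sum big_nat1 /shanks_term big_geq // mulr1 mul1r muln0 coefXn.
  by case: eqP => // N0; case: not_pent; exists 0%N; left.
have [ne1 ne2] : N != (n.+1 * n.+1 + 'C(n.+1, 2))%N /\ N != (n.+1 * n.+1 + 'C(n.+2, 2))%N.
  by split; apply/eqP => eN; apply: not_pent; exists n.+1; [left | right].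
rewrite shanks_sumS coefD IHn add0r -signr_odd.
by case: (odd _); rewrite ?expr1 ?expr0 ?mulN1r ?mul1r ?coefN coefD !coefXn
  (negbTE ne1) (negbTE ne2) addr0 ?oppr0.
Qed.

Lemma coef_euler_poly_eq0 N : ~ gen_pentagonal N -> (euler_poly N)`_N = 0.
Proof. by move=> not_pent; rewrite -coef_shanks_sum_diag coef_shanks_sum_eq0. Qed.

End EulerPentagonal.

Section GeneratingFunctions.
Local Open Scope ring_scope.

Lemma b_coef (R : nzRingType) ell N :
  (b ell N)%:R = (\prod_(k < N.+1)
     \sum_(j < N.+1 | (ell %| k)%N ==> (j == 0 :> nat)) 'X^(k * j) : {poly R})`_N.
Proof.
rewrite bigA_distr_big_dep; under eq_bigr do rewrite prodrXr.
rewrite coef_sum; under eq_bigr do rewrite coefXn.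
rewrite -natr_sum -big_mkcondr /= sum1_card; congr _%:R.
by apply: eq_card => m; rewrite !inE andbC eq_sym.
Qed.

Section CongruenceModXn.
Variables (R : comNzRingType) (M : nat).

Definition eqmodX (p q : {poly R}) := exists s, p = q + s * 'X^M.

Lemma eqmodX_refl p : eqmodX p p.
Proof. by exists 0; rewrite mul0r addr0. Qed.

Lemma eqmodX_sym p q : eqmodX p q -> eqmodX q p.
Proof. by case=> s ->; exists (- s); ring. Qed.

Lemma eqmodX_trans p q t : eqmodX p q -> eqmodX q t -> eqmodX p t.
Proof. by case=> s -> [s' ->]; exists (s + s'); ring. Qed.

Lemma eqmodX_mul p p' q q' : eqmodX p p' -> eqmodX q q' -> eqmodX (p * q) (p' * q').
Proof. by case=> s -> [s' ->]; exists (p' * s' + s * q' + s * s' * 'X^M); ring. Qed.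

Lemma eqmodX_prod I (r : seq I) (P : pred I) (F G : I -> {poly R}) :
  (forall i, P i -> eqmodX (F i) (G i)) ->
  eqmodX (\prod_(i <- r | P i) F i) (\prod_(i <- r | P i) G i).
Proof.
move=> eqFG; elim/big_rec2: _ => [|i p q Pi]; first exact: eqmodX_refl.
exact/eqmodX_mul/eqFG.
Qed.

Lemma eqmodX_coef p q i : eqmodX p q -> (i < M)%N -> p`_i = q`_i.
Proof. by case=> s -> lt_iM; rewrite coefD coefMXn lt_iM addr0. Qed.

Lemma eqmodX_1subX e : (M <= e)%N -> eqmodX (1 - 'X^e) 1.
Proof. by move=> le_Me; exists (- 'X^(e - M)); rewrite mulNr -exprD subnK. Qed.

End CongruenceModXn.

Lemma prod_split_parity (R : comNzRingType) (f : nat -> R) N :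
  \prod_(0 <= j < N) f j.+1 =
  \prod_(0 <= j < N) (if odd j.+1 then f j.+1 else 1) * \prod_(0 <= j < N./2) f (j.+1).*2.
Proof.
elim: N => [|N IHN]; first by rewrite !big_geq // mulr1.
rewrite !big_nat_recr //= IHN uphalf_half; have := odd_double_half N.
case: (odd N) => /= [eN | _]; last by rewrite -!mulrA [_ * f _]mulrC.
rewrite add1n big_nat_recr //= mulr1 (_ : (N./2).+1.*2 = N.+1).
  by rewrite mulrA.
by rewrite doubleS -addnn in eN *; lia.
Qed.

Section DistinctParts.
Variables (R : idomainType) (N : nat).

(* The k-th factor of the generating function of [b 2], truncated in degree N:
   1 + X^k + ... + X^(k N) for odd k, and 1 for even k. *)
Definition geom_sum k : {poly R} :=
  \sum_(j < N.+1 | (2 %| k)%N ==> (j == 0 :> nat)) 'X^(k * j).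

Lemma geom_sum_odd k : odd k -> geom_sum k * (1 - 'X^k) = 1 - 'X^(k * N.+1).
Proof.
move=> odd_k; rewrite /geom_sum dvdn2 odd_k /=; under eq_bigr do rewrite exprM.
by rewrite exprM -[RHS]opprB subrX1 mulrC -mulNr opprB.
Qed.

Lemma geom_sum_even k : ~~ odd k -> geom_sum k = 1.
Proof. by move=> even_k; rewrite /geom_sum dvdn2 even_k (big_pred1 ord0) ?muln0. Qed.

Definition odd_part_poly : {poly R} :=
  \prod_(0 <= j < N) (if odd j.+1 then 1 - 'X^(j.+1) else 1).
Definition even_part_poly : {poly R} := \prod_(0 <= j < N./2) (1 - 'X^((j.+1).*2)).
Definition distinct_poly : {poly R} := \prod_(0 <= j < N) (1 + 'X^(j.+1)).

Lemma geom_prod_odd_part :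
  eqmodX N.+1 ((\prod_(k < N.+1) geom_sum k) * odd_part_poly) 1.
Proof.
rewrite -(big_mkord xpredT) big_ltn // big_add1 /= geom_sum_even // mul1r.
rewrite /odd_part_poly -big_split.
rewrite -[X in eqmodX _ _ X](@big1_eq _ 1 *%R _ (index_iota 0 N) xpredT).
apply: eqmodX_prod => j _ /=.
case: ifP => [odd_j | /negbT even_j].
  by rewrite geom_sum_odd //; apply/eqmodX_1subX/leq_pmull.
by rewrite mulr1 geom_sum_even //; apply: eqmodX_refl.
Qed.

Lemma euler_poly_split : euler_poly R N = odd_part_poly * even_part_poly.
Proof. exact: (prod_split_parity (fun m => 1 - 'X^m)). Qed.

Lemma one_subXn_neq0 m : (0 < m)%N -> (1 - 'X^m : {poly R}) != 0.
Proof.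
by move=> m_gt0; rewrite -opprB oppr_eq0 -polyC1 monic_neq0 // monicXnsubC.
Qed.

Lemma distinct_odd_part : eqmodX N.+1 (distinct_poly * odd_part_poly) 1.
Proof.
have nz_even : even_part_poly != 0.
  by rewrite prodf_seq_neq0; apply/allP => j _ /=; apply: one_subXn_neq0; rewrite double_gt0.
have le_half : (N./2 <= N)%N by rewrite -{2}(odd_double_half N) -addnn; lia.
have cancel_even : even_part_poly * (distinct_poly * odd_part_poly) =
    even_part_poly * \prod_(N./2 <= j < N) (1 - 'X^((j.+1).*2)).
  rewrite mulrCA [in LHS](mulrC even_part_poly) -euler_poly_split -big_split /=.
  rewrite (eq_bigr (fun j => 1 - 'X^((j.+1).*2))) => [|j _].
    by rewrite (@big_cat_nat _ _ _ N./2).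
  by rewrite -addnn exprD; move: ('X^(j.+1) : {poly R}) => Y; ring.
rewrite (mulfI nz_even cancel_even).
rewrite -[X in eqmodX _ _ X](@big1_eq _ 1 *%R _ (index_iota N./2 N) xpredT) !big_nat.
apply: eqmodX_prod => j /andP[le_j _]; apply: eqmodX_1subX.
by move: le_j; rewrite -{1}(odd_double_half N) -!addnn; case: (odd N) => /=; lia.
Qed.

Lemma b2_coef_distinct : (b 2 N)%:R = distinct_poly`_N.
Proof.
set A := \prod_(k < N.+1) geom_sum k.
have A_D_O : eqmodX N.+1 (A * (distinct_poly * odd_part_poly)) A.
  by rewrite -[X in eqmodX _ _ X]mulr1; apply/eqmodX_mul/distinct_odd_part/eqmodX_refl.
have A_O_D : eqmodX N.+1 (A * odd_part_poly * distinct_poly) distinct_poly.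
  by rewrite -[X in eqmodX _ _ X]mul1r; apply/eqmodX_mul/eqmodX_refl/geom_prod_odd_part.
rewrite b_coef -/A; apply: (eqmodX_coef _ (ltnSn N)).
rewrite [distinct_poly * _]mulrC mulrA in A_D_O.
exact: eqmodX_trans (eqmodX_sym A_D_O) A_O_D.
Qed.

End DistinctParts.

Lemma b2_even N : ~ gen_pentagonal N -> (2 %| b 2 N)%N.
Proof.
move=> not_pent; rewrite (dvdn_pcharf (pchar_Fp (isT : prime 2))) b2_coef_distinct.
have -> : distinct_poly 'F_2 N = euler_poly 'F_2 N.
  apply: eq_bigr => j _; congr (1 + _).
  by rewrite oppr_pchar2 // pchar_poly pchar_Fp.
by rewrite coef_euler_poly_eq0.
Qed.

End GeneratingFunctions.

Lemma sqr_bin2 j : j * j = 'C(j, 2) * 2 + j.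
Proof. by elim: j => [//|j IHj]; rewrite binS bin1; nia. Qed.

Lemma gen_pentagonal_sqr N : gen_pentagonal N -> exists x, 24 * N + 1 = x ^ 2.
Proof.
case=> j; have := sqr_bin2 j; have := sqr_bin2 j.+1; rewrite binS bin1 => eSj ej [->|->].
  by case: j eSj ej => [|j] eSj ej; [exists 1 | exists (6 * j + 5); nia].
by exists (6 * j + 1); nia.
Qed.

Lemma prime_ge5_coprime24 q : prime q -> 5 <= q -> coprime q 24.
Proof.
move=> q_prime; rewrite prime_coprime //; apply: contraTN => q_dvd.
have : q \in primes 24 by rewrite mem_primes q_prime q_dvd.
by rewrite !inE => /orP[] /eqP ->.
Qed.

Lemma sqr_coprime24 m : coprime m 24 -> m ^ 2 = 1 %[mod 24].
Proof.
rewrite -modnXm -coprime_modl; move: (m %% 24) (ltn_pmod m (isT : 0 < 24)) => k.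
by do 24 (case: k => [|k] //).
Qed.

Lemma prodn_sqr I (r : seq I) (P : pred I) (F : I -> nat) :
  \prod_(i <- r | P i) F i ^ 2 = (\prod_(i <- r | P i) F i) ^ 2.
Proof. by elim/big_rec2: _ => // i m _ _ ->; rewrite expnMn. Qed.

Lemma mul24_add1_factor y q n i : (y * q) ^ 2 = 1 %[mod 24] ->
  24 * ((y * q) ^ 2 * n + ((24 * i + q) * y ^ 2 * q - 1) %/ 24) + 1 =
  y ^ 2 * q * (24 * q * n + 24 * i + q).
Proof.
set X := (24 * i + q) * y ^ 2 * q => sqr_yq.
have eX : X = i * y ^ 2 * q * 24 + (y * q) ^ 2 by rewrite /X; ring.
have X_mod24 : X = 1 %[mod 24] by rewrite eX modnMDl.
have X_gt0 : 0 < X by case: posnP X_mod24 => // ->.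
have dvd_X1 : 24 %| X - 1 by rewrite -eqn_mod_dvd // X_mod24.
rewrite mulnDr -addnA [24 * (_ %/ 24)]mulnC divnK // subnK // eX; ring.
Qed.

Lemma sqr_mul_prime_neq y q w x : prime q -> ~~ (q %| w) -> 0 < y -> 0 < w ->
  y ^ 2 * q * w <> x ^ 2.
Proof.
move=> q_prime q_ndvd_w y_gt0 w_gt0 /(congr1 (logn q)).
have q_gt0 := prime_gt0 q_prime.
rewrite lognX !lognM ?muln_gt0 ?expn_gt0 ?y_gt0 ?q_gt0 // (logn_prime q q_prime) eqxx.
rewrite (logn_coprime (_ : coprime q w)) ?prime_coprime //.
by move/(congr1 odd); rewrite addn0 !oddD !addbA !addbb.
Qed.

Theorem theorem3p6 (r : nat) (p : nat -> nat) :
  1 <= r ->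
  (forall s, 1 <= s <= r -> prime (p s) /\ 5 <= p s) ->
  forall n i, 1 <= i <= (p r).-1 ->
    b 2 ((\prod_(1 <= s < r.+1) p s ^ 2) * n
         + ((24 * i + p r) * (\prod_(1 <= s < r) p s ^ 2) * p r - 1) %/ 24)
      = 0 %[mod 2].
Proof.
move=> r_gt0 p_prime n i /andP[i_gt0 le_i_pr].
have p_cop24 s : 1 <= s <= r -> coprime (p s) 24.
  by move=> /p_prime[]; apply: prime_ge5_coprime24.
have r_in : 1 <= r <= r by rewrite r_gt0 leqnn.
have [q_prime _] := p_prime r r_in.
have y_cop24 : coprime (\prod_(1 <= s < r) p s) 24.
  rewrite big_nat; apply: (big_ind (coprime^~ 24)) => // [a c|s /andP[s_ge1 lt_sr]].
    by rewrite coprimeMl => -> ->.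
  by apply: p_cop24; rewrite s_ge1 ltnW.
have y_gt0 : 0 < \prod_(1 <= s < r) p s.
  by rewrite lt0n; apply: contraTneq y_cop24 => ->.
have q_ndvd_w : ~~ (p r %| 24 * p r * n + 24 * i + p r).
  rewrite dvdn_addl // dvdn_addr ?(dvdn_mulr _ (dvdn_mull _ (dvdnn _))) //.
  by rewrite Gauss_dvdr ?p_cop24 // gtnNdvd //; lia.
apply/eqP; rewrite mod0n; apply: b2_even => /gen_pentagonal_sqr [x].
rewrite big_nat_recr //= !prodn_sqr -expnMn mul24_add1_factor; last first.
  by apply: sqr_coprime24; rewrite coprimeMl y_cop24 p_cop24.
by apply: sqr_mul_prime_neq; rewrite // addn_gt0 (prime_gt0 q_prime) orbT.
Qed.
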